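(* Let $r\ge2$ be an integer, $n\in\mathbb N$, and $f\in\mathbb W^r$. Classify the indices $j\in\mathbb Z$ as follows: $j$ is of first type if $|f'(x)|\le c_1h^{r-1}$ for all $x\in I_j$; $j$ is of second type if it is not of first type and $|f'(x)|\ge h^{r-1}$ for all $x\in I_j$; all remaining indices are of third type. Then there do not exist $2r-3$ consecutive indices $j,j+1,\dots,j+2r-4$ all of third type (i.e. at most $2r-4$ consecutive indices can be of third type).
   Context: $\mathbb W^{r}$ is the class of $2\pi$-periodic functions whose derivative of order $r-1$ exists and is absolutely continuous and with $|f^{(r)}|\le1$ a.e. on $\mathbb R$. For fixed $n$: $x_j:=-j\pi/n$, $I_j:=[x_j,x_{j-1}]$, $h:=\pi/n$. The constant is $c_1:=\frac{(2r-3)^{r-1}}{(r-1)!}+(r-1)(2r-3)^{r-2}$; it has the property that whenever $g\in\mathbb W^{r-1}$ and there are points $t_\nu\in I_\nu$, $\nu=j,\dots,j+2(r-2)$, with $|g(t_\nu)|\le h^{r-1}$, then $|g(x)|\le c_1h^{r-1}$ on $\bigcup_{\nu=j}^{j+2(r-2)}I_\nu$. *)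

From HB Require Import structures.
From mathcomp Require Import all_boot all_order all_algebra.
From mathcomp Require Import all_classical all_reals all_analysis.
Set Implicit Arguments. Unset Strict Implicit. Unset Printing Implicit Defensive.
Import Order.TTheory GRing.Theory Num.Theory.
Import numFieldNormedType.Exports.
Local Open Scope classical_set_scope.
Local Open Scope ring_scope.

Definition abs_continuous_on {R : realType} (a b : R) (g : R -> R) : Prop :=
  forall e : R, 0 < e -> exists2 d : R, 0 < d &
    forall (k : nat) (s t : nat -> R),
      (forall i, (i < k)%N -> a <= s i /\ s i <= t i /\ t i <= b) ->
      (forall i, (i.+1 < k)%N -> t i <= s i.+1) ->
      \sum_(i < k) (t i - s i) < d ->
      \sum_(i < k) `|g (t i) - g (s i)| < e.

Definition W_class {R : realType} (r : nat) (f : R -> R) : Prop :=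
  [/\ (forall x : R, f (x + 2 * pi) = f x),
      (forall k : nat, (k < r.-1)%N -> forall x : R, derivable (derive1n k f) x 1),
      (forall a b : R, abs_continuous_on a b (derive1n r.-1 f)) &
      {ae (@lebesgue_measure R), forall x : R,
          derivable (derive1n r.-1 f) x 1 /\ `|derive1n r f x| <= 1}].

Definition hstep {R : realType} (n : nat) : R := pi / n%:R.
Definition xgrid {R : realType} (n : nat) (j : int) : R := - (j%:~R * pi / n%:R).
Definition Igrid {R : realType} (n : nat) (j : int) : set R :=
  `[xgrid n j, xgrid n (j - 1)].

Definition c1 {R : realType} (r : nat) : R :=
  ((2 * r - 3)%N%:R ^+ (r - 1)) / ((r - 1)`!)%:R
  + (r - 1)%N%:R * (2 * r - 3)%N%:R ^+ (r - 2).

Definition first_type {R : realType} (r n : nat) (f : R -> R) (j : int) : Prop :=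
  forall x, x \in Igrid n j -> `|derive1 f x| <= c1 r * hstep n ^+ (r - 1).

Definition second_type {R : realType} (r n : nat) (f : R -> R) (j : int) : Prop :=
  ~ first_type r n f j /\
  forall x, x \in Igrid n j -> hstep n ^+ (r - 1) <= `|derive1 f x|.

Definition third_type {R : realType} (r n : nat) (f : R -> R) (j : int) : Prop :=
  ~ first_type r n f j /\ ~ second_type r n f j.

From HB Require Import structures.
From mathcomp Require Import all_boot all_order all_algebra.
From mathcomp Require Import all_classical all_reals all_analysis.
From mathcomp Require Import ring lra zify.
Set Implicit Arguments. Unset Strict Implicit. Unset Printing Implicit Defensive.
Import Order.TTheory GRing.Theory Num.Theory.
Import numFieldNormedType.Exports.
Local Open Scope classical_set_scope.
Local Open Scope ring_scope.

(* Suppose I_j, ..., I_(j+2r-4) are all of third type.  Then each of the r - 1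
   intervals I_j, I_(j+2), ..., I_(j+2r-4) contains a point t_k with
   |f'(t_k)| < h^(r-1); these points are h-separated and lie within (2r-3)h of
   every x in I_j.  Let P interpolate g = f' at the t_k.  Lagrange's formula
   gives |P(x)| <= (r-1) (2r-3)^(r-2) h^(r-1).  Since g^(r-2) = f^(r-1) is
   absolutely continuous with |f^(r)| <= 1 a.e., it is 1-Lipschitz, and r - 2
   applications of Rolle's theorem bound the interpolation error by
   prod_k |x - t_k| / (r-1)! <= (2r-3)^(r-1) h^(r-1) / (r-1)!.  Hence
   |f'| <= c1 h^(r-1) on I_j, so j is of first type, a contradiction. *)

Section AbsContinuousLipschitz.
Context {R : realType}.
Local Notation mu := (@lebesgue_measure R).

(* A relational gauge: [G x e] says that the radius [e] is admissible at [x]. *)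
Definition fine_partition (G : R -> R -> Prop) (a b : R) (m : nat)
    (x t : nat -> R) :=
  [/\ x 0%N = a, x m = b & forall i, (i < m)%N ->
    [/\ x i <= t i, t i <= x i.+1 &
        exists2 e, G (t i) e & t i - x i < e /\ x i.+1 - t i < e]].

(* The supremum [s] of the right endpoints reachable by fine
   partitions is reached as well, by appending to a partition ending near [s]
   one interval tagged at [s]; so it can only be [b]. *)
Lemma fine_partition_exists (G : R -> R -> Prop) (a b : R) : a <= b ->
    (forall x, a <= x <= b -> exists2 e, 0 < e & G x e) ->
  exists m x t, fine_partition G a b m x t.
Proof.
move=> ab HG.
pose S := [set y | a <= y <= b /\ exists m x t, fine_partition G a y m x t].
have aS : S a.
  split; first by rewrite lexx ab.
  by exists 0%N, (fun=> a), (fun=> a); split.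
have hS : has_sup S by split; [exists a | exists b => y [/andP[]]].
set s := sup S.
have ubS := sup_upper_bound hS.
have as_ : a <= s by apply: ubS.
have sb : s <= b by apply: ge_sup; [exists a | move=> y [/andP[]]].
have [e e0 Ge] := HG s ltac:(by rewrite as_ sb).
have [y [/andP[ay yb] [m [x [t [x0 xm xi]]]]] ys] := sup_adherent e0 hS.
have ylts : y <= s by apply: ubS; split; [rewrite ay yb | exists m, x, t].
pose z := Num.min b (s + e / 2).
have sz : s <= z by rewrite le_min sb lerDl divr_ge0 // ltW.
have zS : S z.
  split; first by rewrite (le_trans as_ sz) ge_min lexx.
  exists m.+1, (fun i => if i == m.+1 then z else x i),
         (fun i => if i == m then s else t i).
  split => //=; rewrite ?x0 ?eqxx //.
  move=> i; rewrite ltnS leq_eqVlt => /orP[/eqP ->|im].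
    rewrite eqxx (ltn_eqF (ltnSn m)) xm eqxx; split => //.
    exists e => //; split; first by rewrite -/s in ys; lra.
    have : z <= s + e / 2 by rewrite /z ge_min lexx orbT.
    by lra.
  rewrite (ltn_eqF im) (ltn_eqF (ltn_trans im (ltnSn m))).
  by rewrite (negbTE (_ : i.+1 != m.+1)) ?eqSS ?ltn_eqF //; apply: xi.
have zs : z <= s by apply: ubS.
have sb' : s = b.
  apply/eqP; rewrite eq_le sb leNgt; apply/negP => sltb.
  by move: zs; rewrite /z ge_min => /orP[]; lra.
have zb : z = b by apply/eqP; rewrite eq_le ge_min lexx /= -sb'.
by rewrite -zb; case: zS.
Qed.

Lemma fine_partition_le G a b m x t : fine_partition G a b m x t ->
  forall i k, (i <= k)%N -> (k <= m)%N -> x i <= x k.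
Proof.
move=> [_ _ Hx] i; elim=> [|k IH]; first by rewrite leqn0 => /eqP ->.
rewrite leq_eqVlt ltnS => /orP[/eqP -> //|ik] km.
apply: le_trans (IH ik (ltnW km)) _.
by have [xt tx _] := Hx k km; apply: le_trans tx.
Qed.

Lemma derivable_near_lipschitz (phi : R -> R) (x eps : R) :
    derivable phi x 1 -> 0 < eps ->
  exists2 eta, 0 < eta & forall y, `|y - x| < eta ->
    `|phi y - phi x| <= (`|derive1 phi x| + eps) * `|y - x|.
Proof.
move=> dx e0.
move/cvgrPdist_le: (dx) => /(_ eps e0).
rewrite near_withinE /= => /nbhs_ballP [eta eta0 Hb].
exists eta => // y yx.
have [->|yx0] := eqVneq y x; first by rewrite !subrr normr0 mulr0.
have yxB : ball (0:R) eta (y - x) by rewrite /ball /= sub0r normrN.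
move: (Hb _ yxB); rewrite subr_eq0 => /(_ yx0) /=.
rewrite scaler1 subrK -[lim _]/('D_1 phi x) -derive1E.
set D := derive1 phi x; set q := (y - x)^-1 *: (phi y - phi x) => Dq.
have -> : phi y - phi x = q * (y - x).
  by rewrite /q /= mulrC mulrA mulfV ?subr_eq0 // mul1r.
rewrite normrM ler_wpM2r //.
have -> : q = D - (D - q) by rewrite opprB addrC subrK.
by apply: le_trans (ler_normB _ _) _; rewrite lerD2l.
Qed.

Lemma tagged_lipschitz (phi : R -> R) (c u v w e : R) :
    u <= v -> v <= w -> v - u < e -> w - v < e ->
    (forall y, `|y - v| < e -> `|phi y - phi v| <= c * `|y - v|) ->
  `|phi w - phi u| <= c * (w - u).
Proof.
move=> uv vw vue wve Hv.
have wv : `|w - v| = w - v by rewrite ger0_norm // subr_ge0.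
have uv' : `|u - v| = v - u by rewrite distrC ger0_norm // subr_ge0.
have := Hv w; have := Hv u; rewrite wv uv' => /(_ vue) Hu /(_ wve) Hw.
have -> : phi w - phi u = (phi w - phi v) - (phi u - phi v) by ring.
apply: le_trans (ler_normB _ _) _.
have -> : c * (w - u) = c * (w - v) + c * (v - u) by ring.
exact: lerD.
Qed.

Lemma negligible_open_cover (N : set R) (d : R) :
    measurable N -> mu N = 0%E -> 0 < d ->
  exists2 U, open U & N `<=` U /\ (mu U < d%:E)%E.
Proof.
move=> mN N0 d0.
have Nfin : (mu N < +oo)%E by rewrite N0 ltry.
have [U [oU NU UNd]] := lebesgue_regularity_outer mN Nfin d0.
exists U => //; split => //.
have mU : measurable U by exact: measurable_realfun.open_measurable.
apply: le_lt_trans UNd.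
rewrite -{1}(setDUK NU).
apply: le_trans (measureU2 mu mN (measurableD mU mN)) _.
by rewrite [X in (X + _)%E](_ : _ = 0%E) ?add0e.
Qed.

Lemma lebesgue_measure_sum_subintervals (U : set R) (x : nat -> R)
    (sel : nat -> bool) (m : nat) :
    measurable U -> (forall i, (i < m)%N -> x i <= x i.+1) ->
    (forall i, (i < m)%N -> sel i -> `[x i, x i.+1] `<=` U) ->
  ((\sum_(i < m) (if sel i then x i.+1 - x i else 0))%:E <= mu U)%E.
Proof.
move=> mU xinc xsel.
suff H k : (k <= m)%N ->
    ((\sum_(i < k) (if sel i then x i.+1 - x i else 0))%:E
      <= mu (U `&` `]-oo, x k[))%E.
  apply: le_trans (H m (leqnn m)) _; apply: le_measure; rewrite ?inE //.
  by apply: measurableI => //; exact: measurable_itv.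
elim: k => [_|k IH km]; first by rewrite big_ord0 measure_ge0.
rewrite big_ord_recr /= EFinD.
have mA : measurable (U `&` `]-oo, x k[).
  by apply: measurableI => //; exact: measurable_itv.
have mB : measurable (U `&` `[x k, x k.+1[).
  by apply: measurableI => //; exact: measurable_itv.
apply: le_trans (leeD (IH (ltnW km)) (_ : _ <= mu (U `&` `[x k, x k.+1[))%E) _.
  case: (sel k) (xsel k km) => [/(_ erefl) sub|_]; last by rewrite measure_ge0.
  have -> : U `&` `[x k, x k.+1[ = `[x k, x k.+1[%classic.
    apply/seteqP; split; first exact: subIsetr.
    move=> y /= yi; split => //; apply: sub.
    by move: yi; rewrite /= !in_itv /= => /andP[-> /ltW ->].
  rewrite lebesgue_measure_itv /=; case: ltP => [_|]; first by rewrite -EFinB.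
  by rewrite lee_fin => ge; have := xinc k km; rewrite lee_fin; lra.
rewrite -measureU //; last first.
  apply/seteqP; split => // y [[_ /=]].
  rewrite !in_itv /= => y1 [_ /andP[y2 _]].
  by move: y1 y2; lra.
apply: le_measure; rewrite ?inE //.
- exact: measurableU.
- exact: measurableI.
move=> y [[Uy yk]|[Uy yk]]; split => //; move: yk; rewrite /= !in_itv /=.
  by move/lt_le_trans; apply; apply: xinc.
by case/andP.
Qed.

Lemma lipschitz_or_open_gauge (phi : R -> R) (U : set R) (c eps x : R) :
    open U -> 0 < eps ->
    (~ U x -> derivable phi x 1 /\ `|derive1 phi x| <= c) ->
  exists2 e, 0 < e & (forall y, `|y - x| < e -> U y) \/
    (forall y, `|y - x| < e -> `|phi y - phi x| <= (c + eps) * `|y - x|).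
Proof.
move=> oU e0 dphi; have [Ux|nUx] := pselect (U x).
  have /nbhs_ballP[e e0' He] := oU x Ux.
  by exists e => //; left => y yx; apply: He; rewrite /ball /= distrC.
have [dx dx1] := dphi nUx; have [e e0' He] := derivable_near_lipschitz dx e0.
exists e => //; right => y yx; apply: le_trans (He _ yx) _.
by rewrite ler_wpM2r // lerD2r.
Qed.

(* Cover the null set by an open [U] of measure less than the [delta] of
   absolute continuity for [eps], and take a partition fine for the gauge "the
   ball lies in [U], or [phi] is (1 + eps)-Lipschitz from the tag".  Intervals
   inside [U] have total length below [delta], so they contribute at most
   [eps]; on the others [phi] grows by at most (1 + eps) times the length. *)
Lemma abs_continuous_lipschitz_eps (phi : R -> R) (a b eps : R) :
    abs_continuous_on a b phi ->
    {ae mu, forall x, derivable phi x 1 /\ `|derive1 phi x| <= 1} ->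
    a <= b -> 0 < eps ->
  `|phi b - phi a| <= (1 + eps) * (b - a) + eps.
Proof.
move=> AC [N [mN N0 notP_N]] ab e0.
have [d d0 Hd] := AC eps e0.
have [U oU [NU Ud]] := negligible_open_cover mN N0 d0.
pose G (x e : R) := (forall y, `|y - x| < e -> U y) \/
  (forall y, `|y - x| < e -> `|phi y - phi x| <= (1 + eps) * `|y - x|).
have [m [x [t fine]]] : exists m x t, fine_partition G a b m x t.
  apply: fine_partition_exists ab _ => x _.
  apply: lipschitz_or_open_gauge oU e0 _ => nUx.
  by apply: contrapT => nP; exact: nUx (NU _ (notP_N _ nP)).
have [x0 xm Hx] := fine.
have xinc i : (i < m)%N -> x i <= x i.+1.
  by move=> im; apply: (fine_partition_le fine).
pose inU i := `[< `[x i, x i.+1] `<=` U >].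
pose t' i := if inU i then x i.+1 else x i.
have lip_off_U i : (i < m)%N -> ~~ inU i ->
    `|phi (x i.+1) - phi (x i)| <= (1 + eps) * (x i.+1 - x i).
  move=> im /asboolPn nU; have [xt tx [e [GU|Glip] [e1 e2]]] := Hx i im.
    exfalso; apply: nU => y /=; rewrite in_itv /= => /andP[y1 y2].
    apply: GU; rewrite ltr_distlC; apply/andP; split; lra.
  exact: tagged_lipschitz xt tx e1 e2 Glip.
have small_on_U : \sum_(i < m) `|phi (t' i) - phi (x i)| < eps.
  apply: Hd => [i im|i im|].
  - have xa : a <= x i.
      by rewrite -x0; apply: (fine_partition_le fine) => //; exact: ltnW.
    have xb : x i.+1 <= b by rewrite -xm; apply: (fine_partition_le fine).
    by have := xinc i im; rewrite /t'; case: (inU i); repeat split; lra.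
  - by rewrite /t'; case: (inU i); rewrite ?xinc //; apply: ltnW.
  rewrite -lte_fin; apply: le_lt_trans Ud.
  have mU : measurable U by exact: measurable_realfun.open_measurable.
  have inU_sub i : (i < m)%N -> inU i -> `[x i, x i.+1] `<=` U.
    by move=> _ /asboolP.
  apply: le_trans (lebesgue_measure_sum_subintervals mU xinc inU_sub).
  by rewrite lee_fin; apply: ler_sum => i _; rewrite /t'; case: (inU i);
    rewrite ?subrr ?lexx.
have tele (F : nat -> R) : \sum_(i < m) (F i.+1 - F i) = F m - F 0%N.
  by rewrite -(big_mkord xpredT (fun i => F i.+1 - F i)) telescope_sumr.
have -> : phi b - phi a = \sum_(i < m) (phi (x i.+1) - phi (x i)).
  by rewrite (tele (phi \o x)) /= x0 xm.
apply: le_trans (ler_norm_sum _ _ _) _.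
apply: (le_trans (y := \sum_(i < m)
  (`|phi (t' i) - phi (x i)| + (1 + eps) * (x i.+1 - x i)))).
  apply: ler_sum => i _; rewrite /t'; case inUi: (inU i).
    by rewrite lerDl mulr_ge0 ?subr_ge0 ?xinc //; lra.
  by rewrite subrr normr0 add0r lip_off_U // inUi.
by rewrite big_split /= -mulr_sumr tele x0 xm addrC lerD2l ltW.
Qed.

Lemma abs_continuous_lipschitz (phi : R -> R) :
    (forall a b, abs_continuous_on a b phi) ->
    {ae mu, forall x, derivable phi x 1 /\ `|derive1 phi x| <= 1} ->
  forall a b, `|phi b - phi a| <= `|b - a|.
Proof.
move=> AC ae a b; wlog ab : a b / a <= b.
  by move=> H; case: (leP a b) => [/H//|/ltW /H]; rewrite distrC (distrC b).
rewrite [`|b - a|]ger0_norm ?subr_ge0 //; apply/ler_addgt0Pr => e e0.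
pose eps := e / (b - a + 2).
have den : 0 < b - a + 2 by lra.
have eps0 : 0 < eps by rewrite divr_gt0.
apply: le_trans (abs_continuous_lipschitz_eps (AC a b) ae ab eps0) _.
have : eps * (b - a + 2) = e by rewrite /eps divfK // gt_eqF.
have : 0 <= eps * (b - a) by rewrite mulr_ge0 ?subr_ge0 // ltW.
nra.
Qed.
End AbsContinuousLipschitz.

Section RolleRoots.
Context {R : realType}.

Lemma path_roots_derive1 (F : R -> R) (a : R) (s : seq R) :
    (forall y, derivable F y 1) -> path <%R a s -> F a = 0 ->
    {in s, forall z, F z = 0} ->
  exists s', [/\ path <%R a s', size s' = size s &
                 {in s', forall z, derive1 F z = 0}].
Proof.
move=> dF; elim: s a => [|b s IH] a /=; first by exists [::].
move=> /andP[ab pb] Fa Fs.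
have Fb : F b = 0 by apply: Fs; rewrite inE eqxx.
have Fs' : {in s, forall z, F z = 0}.
  by move=> z zs; apply: Fs; rewrite inE zs orbT.
have [s' [ps' ss' zs']] := IH b pb Fb Fs'.
have cF : {within `[a, b], continuous F}.
  apply: continuous_subspaceT => y.
  by apply: differentiable_continuous; apply/derivable1_diffP.
have [c cab dc] := Rolle ab (fun y _ => dF y) cF (etrans Fa (esym Fb)).
move: cab; rewrite in_itv /= => /andP[ac cb].
exists (c :: s'); split => /=; last 2 first.
- by rewrite ss'.
- move=> z; rewrite inE => /orP[/eqP ->|/zs'] //.
  by rewrite derive1E; apply: (@derive_val _ _ _ _ _ _ _ dc).
rewrite ac /=; case: s' ps' {ss' zs'} => //= d s1 /andP[bd ->].
by rewrite (lt_trans cb bd).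
Qed.

Lemma sorted_roots_derive1n (F : R -> R) (n : nat) (s : seq R) :
    (forall k, (k < n)%N -> forall y, derivable (derive1n k F) y 1) ->
    sorted <%R s -> {in s, forall z, F z = 0} ->
  exists s', [/\ sorted <%R s', size s' = (size s - n)%N &
                 {in s', forall z, derive1n n F z = 0}].
Proof.
elim: n => [|n IH] dF ss Fs; first by exists s; rewrite subn0.
have [[|a s1] [ss1 sz1 z1]] := IH (fun k kn => dF k (ltnW kn)) ss Fs.
  by exists [::]; rewrite subnS -sz1.
have z1' : {in s1, forall z, derive1n n F z = 0}.
  by move=> z zs; apply: z1; rewrite inE zs orbT.
have [s2 [ps2 sz2 z2]] := path_roots_derive1 (dF n (ltnSn n)) ss1
  (z1 a (mem_head _ _)) z1'.
by exists s2; split; [exact: path_sorted ps2|rewrite sz2 subnS -sz1|].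
Qed.
End RolleRoots.

Lemma horner_derivn_size_le {R : nzRingType} (Q : {poly R}) (n : nat) (y : R) :
    (size Q <= n.+2)%N ->
  (Q^`(n)).[y] = Q`_n *+ n`! + Q`_n.+1 *+ (n.+1)`! * y.
Proof.
move=> sQ.
have -> : Q^`(n) = (Q`_n *+ n`!)%:P + (Q`_n.+1 *+ (n.+1)`!)%:P * 'X.
  apply/polyP => i; rewrite coef_derivn coefD coefC coefMX coefC.
  case: i => [|[|i]] /=.
  - by rewrite addn0 ffactnn addr0.
  - by rewrite addn1 add0r -(ffact_fact (leqnSn n)) subSnn muln1.
  - rewrite add0r nth_default ?mul0rn //.
    by apply: leq_trans sQ _; rewrite !addnS !ltnS leq_addr.
by rewrite hornerD hornerC hornerMX hornerC.
Qed.

Section InterpolationRemainder.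
Context {R : realType} (g : R -> R) (n : nat).
Hypothesis g_derivable :
  forall k, (k < n)%N -> forall y, derivable (derive1n k g) y 1.
Hypothesis g_lipschitz :
  forall u v, `|derive1n n g v - derive1n n g u| <= `|v - u|.

Let derive1n_sub_horner (Q : {poly R}) k : (k <= n)%N ->
  derive1n k (fun y => g y - Q.[y]) = derive1n k g - horner (Q^`(k)).
Proof.
elim: k => [_|k IH kn]; first by rewrite derivn0.
rewrite [LHS]/= IH ?(ltnW kn) //; apply/funext => y.
rewrite derive1E deriveB; [|exact: g_derivable|exact: derivable_horner].
by rewrite -!derive1E -derivE derivnS.
Qed.

(* Rolle's theorem applied [n] times leaves two zeros [u < v] of the [n]-th
   derivative of [g - Q], on which [Q^`(n)] is affine with slope
   [Q`_n.+1 * (n.+1)`!]. *)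
Lemma interp_coef_lipschitz_bound (Q : {poly R}) (s : seq R) :
    (size Q <= n.+2)%N -> sorted <%R s -> size s = n.+2 ->
    {in s, forall z, g z = Q.[z]} ->
  `|Q`_n.+1| * (n.+1)`!%:R <= 1.
Proof.
move=> sQ ss sz gQ.
have de k : (k < n)%N -> forall y,
    derivable (derive1n k (fun y => g y - Q.[y])) y 1.
  move=> kn y; rewrite derive1n_sub_horner ?(ltnW kn) //.
  by apply: derivableB; [exact: g_derivable|exact: derivable_horner].
have e0 : {in s, forall z, g z - Q.[z] = 0} by move=> z /gQ ->; rewrite subrr.
have [s' [ss' sz' zs']] := sorted_roots_derive1n de ss e0.
rewrite sz -addn2 addKn in sz'.
case: s' ss' sz' zs' => [|u [|v [|? ?]]] //= /andP[uv _] _ zs'.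
have := zs' u (mem_head _ _); have := zs' v (mem_last u [:: v]).
rewrite derive1n_sub_horner // !fctE !horner_derivn_size_le // => /eqP + /eqP.
rewrite !subr_eq0 => /eqP gv /eqP gu.
have := g_lipschitz u v; rewrite gv gu opprD addrACA subrr add0r -mulrBr.
have vu : 0 < v - u by rewrite subr_gt0.
by rewrite normrM normrMn (gtr0_norm vu) ger_pMl // mulr_natr.
Qed.

Lemma interp_remainder_bound (P : {poly R}) (t : nat -> R) (x : R) :
    injective t -> (size P <= n.+1)%N ->
    (forall i, (i < n.+1)%N -> P.[t i] = g (t i)) ->
  `|g x - P.[x]| <= `|\prod_(i < n.+1) (x - t i)| / (n.+1)`!%:R.
Proof.
move=> tinj sP gP.
have fact0 : (0 : R) < (n.+1)`!%:R by rewrite ltr0n fact_gt0.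
have [[i ip ->]|xt] := pselect (exists2 i, (i < n.+1)%N & x = t i).
  by rewrite gP // subrr normr0 divr_ge0 // ltW.
pose w := \prod_(i < n.+1) ('X - (t i)%:P).
have wx : w.[x] = \prod_(i < n.+1) (x - t i).
  by rewrite horner_prod; apply: eq_bigr => i _; rewrite hornerXsubC.
have wx0 : w.[x] != 0.
  rewrite wx; apply/prodf_neq0 => i _; rewrite subr_eq0.
  by apply/eqP => xti; apply: xt; exists i.
(* [Q] interpolates [g] at [x] as well, and its leading coefficient is [K]. *)
pose K := (g x - P.[x]) / w.[x].
pose Q := P + K%:P * w.
have sw : size w = n.+2.
  by rewrite size_prod_XsubC -[index_enum _]enumT size_enum_ord.
have sQ : (size Q <= n.+2)%N.
  rewrite (leq_trans (size_polyD _ _)) // geq_max (leq_trans sP) //.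
  apply: leq_trans (size_mul_leq _ _) _.
  by have := size_polyC_leq1 K; rewrite sw; lia.
have QK : Q`_n.+1 = K.
  rewrite coefD coefCM nth_default // add0r.
  have /monicP : w \is monic by apply: monic_prod_XsubC.
  by rewrite /lead_coef sw => ->; rewrite mulr1.
pose s := x :: [seq t i | i <- iota 0 n.+1].
have gQ : {in s, forall z, g z = Q.[z]}.
  move=> z; rewrite inE => /orP[/eqP ->|/mapP[i]].
    by rewrite /Q hornerD hornerM hornerC /K divfK //; ring.
  rewrite mem_iota add0n /= => ip ->; rewrite /Q hornerD hornerM hornerC.
  have -> : w.[t i] = 0.
    by rewrite horner_prod (bigD1 (Ordinal ip)) //= hornerXsubC subrr mul0r.
  by rewrite mulr0 addr0 gP.
have ss : sorted <%R (sort <=%R s).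
  rewrite sort_lt_sorted cons_uniq map_inj_uniq ?iota_uniq // andbT.
  apply/mapP => -[i]; rewrite mem_iota add0n /= => ip xti.
  by apply: xt; exists i.
have Kb : `|K| * (n.+1)`!%:R <= 1.
  rewrite -QK; apply: interp_coef_lipschitz_bound sQ ss _ _.
    by rewrite size_sort /= size_map size_iota.
  by move=> z; rewrite mem_sort; apply: gQ.
have -> : g x - P.[x] = K * w.[x] by rewrite /K divfK.
rewrite normrM -wx mulrC ler_pdivlMr // -mulrA ler_piMr //.
Qed.
End InterpolationRemainder.

Section InterpolationBound.
Context {R : realType} (t : nat -> R) (h : R).
Hypothesis h_gt0 : 0 < h.
Hypothesis t_sep : forall i k, i != k -> h <= `|t i - t k|.

Let t_inj : injective t.
Proof.
move=> i k tik; apply/eqP; apply: contraT => ik.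
by have := t_sep ik; rewrite tik subrr normr0 leNgt h_gt0.
Qed.

Lemma lagrange_horner_bound (p : nat) (i : 'I_p.+1) (L x : R) :
    (forall j : 'I_p.+1, `|x - t j| <= L) ->
  `|(tnth (lagrange _ t) i).[x]| <= L ^+ p / h ^+ p.
Proof.
move=> dist.
have prodE (c : R) : \prod_(j < p.+1 | j != i) c = c ^+ p.
  by rewrite (eq_bigl (mem (predC1 i))) // prodr_const cardC1 card_ord.
have plE y : (\prod_(j < p.+1 | j != i) ('X - (t j)%:P)).[y]
    = \prod_(j < p.+1 | j != i) (y - t j).
  by rewrite horner_prod; apply: eq_bigr => j _; rewrite hornerXsubC.
rewrite (lagrangeE (ltn0Sn p) t_inj) /= hornerM hornerC normrM normfV mulrC.
rewrite !plE !normr_prod.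
have hp : 0 < h ^+ p by rewrite exprn_gt0.
have d0 : 0 < \prod_(j < p.+1 | j != i) `|t i - t j|.
  rewrite -normr_prod normr_gt0; apply/prodf_neq0 => j ji.
  by rewrite subr_eq0 (inj_eq t_inj) eq_sym.
rewrite ler_pdivrMr // mulrAC ler_pdivlMr //.
apply: ler_pM; rewrite ?prodr_ge0 ?exprn_ge0 ?(ltW h_gt0) // -prodE.
all: apply: ler_prod => j ji.
  by rewrite normr_ge0 dist.
by rewrite (ltW h_gt0) t_sep // (inj_eq val_inj) eq_sym.
Qed.

Lemma interp_bound (g : R -> R) (n : nat) (L x : R) :
    (forall k, (k < n)%N -> forall y, derivable (derive1n k g) y 1) ->
    (forall u v, `|derive1n n g v - derive1n n g u| <= `|v - u|) ->
    (forall i, (i < n.+1)%N -> `|g (t i)| <= h ^+ n.+1) ->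
    (forall i, (i < n.+1)%N -> `|x - t i| <= L) ->
  `|g x| <= L ^+ n.+1 / (n.+1)`!%:R + n.+1%:R * L ^+ n * h.
Proof.
move=> g_derivable g_lipschitz small dist.
have n_gt0 := ltn0Sn n.
pose P := \sum_(i < n.+1) g (t i) *: (tnth (lagrange _ t) i : {poly R}).
have sP : (size P <= n.+1)%N.
  rewrite /P; elim/big_ind: _ => [|p q sp sq|i _]; first by rewrite size_poly0.
    by rewrite (leq_trans (size_polyD _ _)) // geq_max sp sq.
  by rewrite (leq_trans (size_scale_leq _ _)) // size_lagrange_.
have Pt i : (i < n.+1)%N -> P.[t i] = g (t i).
  move=> ip; rewrite /P horner_sum (bigD1 (Ordinal ip)) //= big1 ?addr0.
    by rewrite hornerZ (lagrange_sample n_gt0 t_inj _ (Ordinal ip)) eqxx mulr1.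
  move=> j ji; rewrite hornerZ (lagrange_sample n_gt0 t_inj _ (Ordinal ip)).
  by rewrite (negbTE ji) mulr0.
rewrite -[g x](subrK P.[x]); apply: le_trans (ler_normD _ _) _; apply: lerD.
  move: (interp_remainder_bound g_derivable g_lipschitz x t_inj sP Pt).
  move/le_trans; apply.
  rewrite ler_pM2r ?invr_gt0 ?ltr0n ?fact_gt0 // normr_prod.
  have -> : L ^+ n.+1 = \prod_(i < n.+1) L by rewrite prodr_const card_ord.
  by apply: ler_prod => i _; rewrite normr_ge0 dist.
rewrite horner_sum; apply: le_trans (ler_norm_sum _ _ _) _.
apply: (le_trans (y := \sum_(i < n.+1) h ^+ n.+1 * (L ^+ n / h ^+ n))).
  apply: ler_sum => i _; rewrite hornerZ normrM.
  apply: ler_pM => //; first exact: small.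
  by apply: lagrange_horner_bound => j; apply: dist.
have hn : h ^+ n != 0 by rewrite expf_neq0 // gt_eqF.
have -> : h ^+ n.+1 * (L ^+ n / h ^+ n) = L ^+ n * h.
  by rewrite exprSr mulrAC mulrCA mulfV // mulr1.
by rewrite sumr_const card_ord mulr_natl mulrnAl.
Qed.
End InterpolationBound.

Lemma choice_upto (T : Type) (A : nat -> set T) (P : T -> Prop) (q : nat) :
    (forall k, A k !=set0) ->
    (forall k, (k <= q)%N -> exists2 y, A k y & P y) ->
  exists2 t : nat -> T,
    (forall k, A k (t k)) & (forall k, (k <= q)%N -> P (t k)).
Proof.
move=> A0 AP.
have pick k : exists y, A k y /\ ((k <= q)%N -> P y).
  have [kq|qk] := leqP k q; first by have [y Ay Py] := AP k kq; exists y.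
  by have [y Ay] := A0 k; exists y; split => //; rewrite leqNgt qk.
have [t Ht] := choice pick.
by exists t => k; have [] := Ht k.
Qed.

Section Grid.
Context {R : realType} (n : nat).
Local Notation h := (hstep n : R).

Lemma hstep_ge0 : 0 <= h.
Proof. by rewrite divr_ge0 ?ler0n // ltW // pi_gt0. Qed.

Lemma hstep_gt0 : (0 < n)%N -> 0 < h.
Proof. by move=> n0; rewrite divr_gt0 ?ltr0n // pi_gt0. Qed.

Lemma Igrid_mem (m : int) (y : R) :
  y \in Igrid n m <-> - (m%:~R * h) <= y <= - (m%:~R * h) + h.
Proof.
rewrite /Igrid /xgrid /hstep inE /= in_itv /= !mulrA intrD mulrBl mul1r mulrBl.
by rewrite opprB addrC.
Qed.

Lemma Igrid_neq0 (m : int) : Igrid (R := R) n m !=set0.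
Proof.
exists (- (m%:~R * h)); apply: set_mem; apply/Igrid_mem.
by rewrite lexx lerDl hstep_ge0.
Qed.

Lemma Igrid_dist (j : int) (k : nat) (y z : R) :
  y \in Igrid n j -> z \in Igrid n (j + k%:Z) -> `|y - z| <= k.+1%:R * h.
Proof.
move=> /Igrid_mem/andP[y1 y2] /Igrid_mem/andP[z1 z2].
move: z1 z2; rewrite intrD mulrDl -natr1 mulrDl mul1r => z1 z2.
have kh : 0 <= k%:R * h by rewrite mulr_ge0 ?ler0n ?hstep_ge0.
rewrite ler_norml; apply/andP; split; lra.
Qed.

Lemma Igrid_sep (j : int) (i k : nat) (y z : R) : (i < k)%N ->
    y \in Igrid n (j + i%:Z) -> z \in Igrid n (j + k%:Z) ->
  (k - i.+1)%N%:R * h <= y - z.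
Proof.
move=> ik /Igrid_mem/andP[y1 y2] /Igrid_mem/andP[z1 z2].
move: y1 y2 z1 z2; rewrite !intrD !mulrDl => y1 y2 z1 z2.
have -> : (k - i.+1)%N%:R * h = k%:R * h - i%:R * h - h.
  by rewrite natrB // -natr1; ring.
lra.
Qed.
End Grid.

Section Classification.
Context {R : realType}.

Lemma W_class_derive1 (q : nat) (f : R -> R) : W_class q.+2 f ->
  (forall k, (k < q)%N -> forall y, derivable (derive1n k (derive1 f)) y 1) /\
  (forall u v,
    `|derive1n q (derive1 f) v - derive1n q (derive1 f) u| <= `|v - u|).
Proof.
move=> [_ f_derivable f_ac f_ae]; rewrite -derive1Sn; split.
  by move=> k kq y; rewrite -derive1Sn; apply: f_derivable.
exact: abs_continuous_lipschitz.
Qed.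

Lemma third_type_small (r n : nat) (f : R -> R) (j : int) :
    third_type r n f j ->
  exists2 y, y \in Igrid n j & `|derive1 f y| < hstep n ^+ (r - 1).
Proof.
move=> [not_first not_second]; apply: contrapT => no_small.
apply: not_second; split => // y yI; rewrite leNgt; apply/negP => small.
by apply: no_small; exists y.
Qed.

Lemma c1_hstep (q : nat) (h : R) :
  c1 q.+2 * h ^+ q.+1 =
  ((2 * q).+1%:R * h) ^+ q.+1 / (q.+1)`!%:R
  + q.+1%:R * ((2 * q).+1%:R * h) ^+ q * h.
Proof.
rewrite /c1 (_ : (2 * q.+2 - 3 = (2 * q).+1)%N); last by lia.
by rewrite subn1 subn2 /= !exprMn !exprS; ring.
Qed.
End Classification.

Theorem lemma2 (R : realType) (r n : nat) (f : R -> R) :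
  (2 <= r)%N -> (0 < n)%N -> W_class r f ->
  ~ (exists j : int, forall i : nat, (i <= 2 * r - 4)%N ->
        third_type r n f (j + i%:Z)).
Proof.
move=> r2 n0 Wf [j third]; case: r r2 Wf third => [|[|q]] // _ Wf third.
have [g_derivable g_lipschitz] := W_class_derive1 Wf.
set h : R := hstep n; have h0 : 0 < h := hstep_gt0 n0.
have [t tI t_small] : exists2 t : nat -> R,
    (forall k, t k \in Igrid n (j + (2 * k)%N%:Z)) &
    (forall k, (k <= q)%N -> `|derive1 f (t k)| < h ^+ q.+1).
  have third_small k : (k <= q)%N ->
      exists2 y, Igrid n (j + (2 * k)%N%:Z) y & `|derive1 f y| < h ^+ q.+1.
    move=> kq; have /third_type_small[y yI y_small] :
        third_type q.+2 n f (j + (2 * k)%N%:Z) by apply: third; lia.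
    by exists y; [exact: set_mem | rewrite subn1 in y_small].
  have [t tI t_small] := choice_upto (fun k => @Igrid_neq0 R n _) third_small.
  by exists t => // k; apply: mem_set.
have t_sep i k : i != k -> h <= `|t i - t k|.
  move=> ik; wlog {ik} ik : i k / (i < k)%N.
    by move=> H; move: ik; rewrite neq_ltn => /orP[/H//|/H]; rewrite distrC.
  have ik2 : (2 * i < 2 * k)%N by rewrite ltn_mul2l.
  apply: le_trans (le_trans _ (Igrid_sep ik2 (tI i) (tI k))) (ler_norm _).
  by rewrite ler_peMl ?(ltW h0) // ler1n; lia.
have [+ _] := third 0%N isT; apply; rewrite /first_type addr0 subn1 -/h => x xI.
rewrite c1_hstep.
apply: (interp_bound h0 t_sep g_derivable g_lipschitz) => k kq.
  exact: ltW (t_small k kq).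
apply: le_trans (Igrid_dist xI (tI k)) _.
by rewrite ler_wpM2r ?ler_nat //; [exact: ltW | lia].
Qed.
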